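(* Let $G=(V,E,w)$ be a connected edge-weighted graph with positive rational weights and at least two vertices. A set $S\subseteq V$ is a weighted partial positive influence connected dominating set (WPPICDS) if and only if $f(S)=h_{\max}+\frac{|V|-2}{L}$, where $f=h+c$ and $h_{\max}=\max_{X\subseteq V}h(X)$.
   Context: $N_A(v)=N(v)\cap A$, $W_A(v)=\sum_{u\in N_A(v)}w_{(v,u)}$, $W(v)=W_V(v)$. $h(A)=\sum_{v\in V}h_A(v)$ with $h_A(v)=W(v)/2$ if $v\in A$ or $W_A(v)\ge W(v)/2$, and $h_A(v)=W_A(v)$ otherwise. $L=\max_v l(v)$, where $l(v)$ is the lcm of the denominators of the reduced fractions $W(v)/2$ and of the weights of edges incident to $v$. $p(A)$ is the number of connected components of $G[A]$ ($p(\emptyset)=0$), $q(A)$ the number of connected components of the spanning subgraph $(V,\{e\in E: e\text{ has at least one endpoint in }A\})$, and $c(A)=\frac1L(|V|-q(A)-p(A))$. A WPPICDS is a set $S\subseteq V$ such that every $v\in V\setminus S$ satisfies $W_S(v)\ge W(v)/2$ and $G[S]$ is connected. *)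

From mathcomp Require Import all_boot all_order all_algebra.
Set Implicit Arguments. Unset Strict Implicit. Unset Printing Implicit Defensive.
Import Order.TTheory GRing.Theory Num.Theory.
Local Open Scope ring_scope.

(* A graph G = (V, E, w): V a finite type, e a symmetric irreflexive
   adjacency relation, w : V -> V -> rat the edge weights (only values on
   edges are meaningful). *)
Section WPPICDS.
Variables (V : finType) (e : rel V) (w : V -> V -> rat).

Definition NA (A : {set V}) (v : V) : {set V} := [set u in A | e v u].
Definition WA (A : {set V}) (v : V) : rat := \sum_(u in NA A v) w v u.
Definition Wt (v : V) : rat := WA [set: V] v.

Definition hA (A : {set V}) (v : V) : rat :=
  if (v \in A) || (Wt v / 2%:R <= WA A v) then Wt v / 2%:R else WA A v.
Definition h (A : {set V}) : rat := \sum_(v : V) hA A v.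

(* h_max = max_{X ⊆ V} h(X)  (h >= 0, so 0 is a harmless seed) *)
Definition hmax : rat := \big[Num.max/0]_(X : {set V}) h X.

Definition lv (v : V) : nat :=
  lcmn `|denq (Wt v / 2%:R)|%N
       (\big[lcmn/1%N]_(u | e v u) `|denq (w v u)|%N).
Definition Lc : nat := \max_(v : V) lv v.

Definition edgeIn (A : {set V}) : rel V :=
  fun x y => [&& e x y, x \in A & y \in A].
Definition p (A : {set V}) : nat :=
  #|[set [set y | connect (edgeIn A) x y] | x in A]|.

(* q(A): number of components of the spanning subgraph (V, {edges with an
   endpoint in A}) *)
Definition edgeTouch (A : {set V}) : rel V :=
  fun x y => e x y && ((x \in A) || (y \in A)).
Definition q (A : {set V}) : nat :=
  #|[set [set y | connect (edgeTouch A) x y] | x : V]|.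

Definition c (A : {set V}) : rat :=
  ((#|V|%:R - (q A)%:R - (p A)%:R) / (Lc%:R)).

Definition f (A : {set V}) : rat := h A + c A.

Definition is_WPPICDS (S : {set V}) : Prop :=
  (forall v, v \notin S -> Wt v / 2%:R <= WA S v) /\
  (forall x y, x \in S -> y \in S -> connect (edgeIn S) x y).

End WPPICDS.

From mathcomp Require Import all_boot all_order all_algebra zify ring lra.
Set Implicit Arguments. Unset Strict Implicit. Unset Printing Implicit Defensive.
Import Order.TTheory GRing.Theory Num.Theory.
Local Open Scope ring_scope.

(* h(A) never exceeds the sum of the W(v)/2, with equality exactly when A
   dominates every vertex; otherwise some W(v)/2 - W_A(v) is a positive
   multiple of 1/l(v), so h(A) falls short by at least 1/L.  On the other
   side p(A) + q(A) >= 2, so c(A) <= (|V| - 2)/L.  Hence f(S) attains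
   h_max + (|V| - 2)/L exactly when S dominates every vertex and
   p(S) = q(S) = 1; a dominating S is nonempty and every vertex outside S
   has a neighbour in S, so q(S) = 1 as soon as G[S] is connected. *)

Lemma mulr_denq_dvd_int (x : rat) (l : nat) :
  (`|denq x| %| l)%N -> x * l%:R \is a Num.int.
Proof.
case/dvdnP=> k ->; apply/intrP; exists (numq x * k%:Z).
rewrite -{1}(divq_num_den x) natrM rmorphM /=.
have -> : (`|denq x|%N)%:R = (denq x)%:~R :> rat.
  by rewrite natr_absz ger0_norm // ltW // denq_gt0.
have den_neq0 : (denq x)%:~R != 0 :> rat by rewrite intr_eq0 denq_neq0.
by field.
Qed.

Lemma int_gap_ge_inv (R : archiRealFieldType) (x y : R) (l : nat) :
  x * l%:R \is a Num.int -> y * l%:R \is a Num.int -> y < x -> l%:R^-1 <= x - y.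
Proof.
move=> xl yl lt_yx; have dpos : 0 < x - y by rewrite subr_gt0.
have [->|l_gt0] := posnP l; first by rewrite invr0 ltW.
have dl_int : (x - y) * l%:R \is a Num.int by rewrite mulrBl rpredB.
have dl_gt0 : 0 < (x - y) * l%:R by rewrite mulr_gt0 // ltr0n.
have := norm_intr_ge1 dl_int (lt0r_neq0 dl_gt0).
by rewrite gtr0_norm // -ler_pdivrMr ?ltr0n // div1r.
Qed.

Section Components.
Variables (V : finType) (r : rel V).
Hypothesis r_sym : symmetric r.

Definition component x := [set y | connect r x y].
Definition components (A : {pred V}) := [set component x | x in A].

Lemma component_eq x y : connect r x y -> component x = component y.
Proof.
move=> cxy; apply/setP=> z; rewrite !inE.
by apply/idP/idP; apply: connect_trans; rewrite // (sym_connect_sym r_sym).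
Qed.

Lemma card_components_gt0 (A : {pred V}) x : x \in A -> (0 < #|components A|)%N.
Proof. by move=> xA; apply/card_gt0P; exists (component x); apply: imset_f. Qed.

Lemma card_components_gt1 (A : {pred V}) x y :
  x \in A -> y \in A -> ~~ connect r x y -> (1 < #|components A|)%N.
Proof.
move=> xA yA nc; have neq : component x != component y.
  apply/eqP=> E; have : y \in component x by rewrite E inE connect0.
  by rewrite inE (negbTE nc).
have : [set component x; component y] \subset components A.
  by apply/subsetP=> s; rewrite !inE => /orP[]/eqP->; apply: imset_f.
by move/subset_leq_card; rewrite cards2 neq.
Qed.

Lemma card_components_eq1 (A : {pred V}) x :
  x \in A -> {in A &, forall y z, connect r y z} -> #|components A| = 1%N.
Proof.
move=> xA conA; suff -> : components A = [set component x] by rewrite cards1.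
apply/setP=> s; rewrite inE; apply/imsetP/eqP => [[y yA ->]|->].
  by apply: component_eq; apply: conA.
by exists x.
Qed.

Lemma card_components1_connect (A : {pred V}) :
  #|components A| = 1%N -> {in A &, forall x y, connect r x y}.
Proof.
move=> A1 x y xA yA; apply: contraTT isT => nc.
by have := card_components_gt1 xA yA nc; rewrite A1.
Qed.

End Components.

Section Domination.
Variables (V : finType) (e : rel V) (w : V -> V -> rat).
Hypotheses (e_sym : symmetric e) (w_pos : forall x y, e x y -> 0 < w x y)
  (G_conn : forall x y, connect e x y) (V_ge2 : (2 <= #|V|)%N).

Let V_gt0 : (0 < #|V|)%N. Proof. lia. Qed.

Lemma exists_other_vertex (v : V) : exists u, u != v.
Proof.
have : (0 < #|[set~ v]|)%N by rewrite cardsC1; lia.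
by case/card_gt0P=> u; rewrite !inE; exists u.
Qed.

Lemma exists_neighbour v : exists u, e v u.
Proof.
have [y yv] := exists_other_vertex v.
case/connectP: (G_conn v y) => -[|u s] /=; first by move=> _ yE; rewrite yE eqxx in yv.
by case/andP=> evu _ _; exists u.
Qed.

Lemma WA_ge0 (A : {set V}) v : 0 <= WA e w A v.
Proof. by apply: sumr_ge0 => u; rewrite inE => /andP[_ /w_pos/ltW]. Qed.

Lemma Wt_gt0 v : 0 < Wt e w v.
Proof.
have [u evu] := exists_neighbour v.
rewrite /Wt /WA (bigD1 u) ?inE ?evu //=.
rewrite ltr_pwDl ?w_pos //; apply: sumr_ge0 => i.
by rewrite inE => /andP[/andP[_ /w_pos/ltW]].
Qed.

Lemma halfWt_le0F v : (Wt e w v / 2%:R <= 0) = false.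
Proof. by rewrite leNgt divr_gt0 ?Wt_gt0. Qed.

Definition dominated (A : {set V}) v :=
  (v \in A) || (Wt e w v / 2%:R <= WA e w A v).

Definition hfull := \sum_(v : V) Wt e w v / 2%:R.

Lemma hA_le (A : {set V}) v : hA e w A v <= Wt e w v / 2%:R.
Proof.
rewrite /hA; case: ifP => // /negbT; rewrite negb_or -ltNge.
by case/andP=> _ /ltW.
Qed.

Lemma hA_ge0 (A : {set V}) v : 0 <= hA e w A v.
Proof.
rewrite /hA; case: ifP => _; last exact: WA_ge0.
by rewrite divr_ge0 ?ltW ?Wt_gt0.
Qed.

Lemma h_dominating (A : {set V}) : (forall v, dominated A v) -> h e w A = hfull.
Proof. by move=> domA; apply: eq_bigr => v _; rewrite /hA -/(dominated A v) domA. Qed.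

Lemma hmax_hfull : hmax e w = hfull.
Proof.
have hT : h e w [set: V] = hfull by apply: h_dominating => v; rewrite /dominated inE.
apply/le_anti/andP; split; last by rewrite -{1}hT; apply: le_bigmax.
apply: bigmax_le => [|X _]; first by rewrite -hT sumr_ge0 // => v _; apply: hA_ge0.
by apply: ler_sum => v _; apply: hA_le.
Qed.

Lemma lv_gt0 v : (0 < lv e w v)%N.
Proof.
rewrite lcmn_gt0 absz_gt0 denq_neq0 /=.
by elim/big_ind: _ => // [m n|u _]; rewrite ?lcmn_gt0 ?absz_gt0 ?denq_neq0 // => ->.
Qed.

Lemma Lc_gt0 : (0 < Lc e w)%N.
Proof. by have /card_gt0P[v _] := V_gt0; apply: leq_trans (lv_gt0 v) (leq_bigmax v). Qed.

(* l(v) clears the denominators of W(v)/2 and of every w(v,u) occurring in W_A(v). *)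
Lemma undominated_gap (A : {set V}) v :
  ~~ dominated A v -> (Lc e w)%:R^-1 <= Wt e w v / 2%:R - WA e w A v.
Proof.
rewrite negb_or -ltNge => /andP[_ lt_WA].
have half_int : Wt e w v / 2%:R * (lv e w v)%:R \is a Num.int.
  exact/mulr_denq_dvd_int/dvdn_lcml.
have WA_int : WA e w A v * (lv e w v)%:R \is a Num.int.
  rewrite mulr_suml rpred_sum // => u; rewrite inE => /andP[_ evu].
  apply/mulr_denq_dvd_int/(dvdn_trans _ (dvdn_lcmr _ _)).
  exact: biglcmn_sup evu _.
apply: le_trans (int_gap_ge_inv half_int WA_int lt_WA).
by rewrite lef_pV2 ?posrE ?ltr0n ?Lc_gt0 ?lv_gt0 // ler_nat leq_bigmax.
Qed.

Lemma h_undominated (A : {set V}) v :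
  ~~ dominated A v -> h e w A <= hfull - (Lc e w)%:R^-1.
Proof.
move=> ndom; have gap := undominated_gap ndom.
have hAv : hA e w A v = WA e w A v by rewrite /hA -/(dominated A v) (negbTE ndom).
have rest : \sum_(u | u != v) hA e w A u <= \sum_(u | u != v) Wt e w u / 2%:R.
  by apply: ler_sum => u _; apply: hA_le.
rewrite /h /hfull (bigD1 v) // [X in _ <= X - _](bigD1 v) //=.
lra.
Qed.

Lemma dominating_nonempty (A : {set V}) :
  (forall v, dominated A v) -> exists v, v \in A.
Proof.
move=> domA; have [A0|[v vA]] := set_0Vmem A; last by exists v.
have /card_gt0P[v _] := V_gt0; have := domA v.
rewrite /dominated A0 inE /= /WA /NA (_ : [set u in set0 | e v u] = set0) ?big_set0.
  by rewrite halfWt_le0F.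
by apply/setP=> u; rewrite !inE.
Qed.

Lemma edgeIn_sym (A : {set V}) : symmetric (edgeIn e A).
Proof. by move=> x y; rewrite /edgeIn e_sym [(x \in A) && _]andbC. Qed.

Lemma edgeTouch_sym (A : {set V}) : symmetric (edgeTouch e A).
Proof. by move=> x y; rewrite /edgeTouch e_sym orbC. Qed.

Lemma p_gt0 (A : {set V}) v : v \in A -> (0 < p e A)%N.
Proof. exact: card_components_gt0. Qed.

Lemma q_gt0 (A : {set V}) : (0 < q e A)%N.
Proof. by have /card_gt0P[v _] := V_gt0; apply: (@card_components_gt0 _ _ predT v). Qed.

Lemma p_set0 : p e set0 = 0%N.
Proof. by rewrite /p imset0 cards0. Qed.

Lemma q_set0 : (1 < q e set0)%N.
Proof.
have /card_gt0P[v _] := V_gt0; have [u uv] := exists_other_vertex v.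
apply: (@card_components_gt1 _ _ predT u v) => //.
apply/negP=> /connectP[[|x s] /=]; first by move=> _ uE; rewrite uE eqxx in uv.
by rewrite /edgeTouch !inE andbF.
Qed.

Lemma p_add_q_ge2 (A : {set V}) : (2 <= p e A + q e A)%N.
Proof.
have [->|[v vA]] := set_0Vmem A; first by rewrite p_set0 q_set0.
by have := p_gt0 vA; have := q_gt0 A; lia.
Qed.

(* A dominated vertex outside A has a neighbour in A, since W_A(v) >= W(v)/2 > 0. *)
Lemma q_dominating_connected (A : {set V}) :
  (forall v, dominated A v) -> {in A &, forall x y, connect (edgeIn e A) x y} ->
  q e A = 1%N.
Proof.
move=> domA conA.
have toA x : exists2 s, s \in A & connect (edgeTouch e A) x s.
  case xA : (x \in A); first by exists x.
  have := domA x; rewrite /dominated xA /=.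
  have [NA0 | [u]] := set_0Vmem (NA e A x).
    by rewrite /WA NA0 big_set0 halfWt_le0F.
  rewrite inE => /andP[uA exu] _; exists u => //.
  by apply: connect1; rewrite /edgeTouch exu uA orbT.
have inToTouch : subrel (edgeIn e A) (edgeTouch e A).
  by move=> x y /and3P[exy xA _]; rewrite /edgeTouch exy xA.
have /card_gt0P[v0 _] := V_gt0.
apply: (@card_components_eq1 _ _ (edgeTouch_sym A) predT v0) => // x y _ _.
have [s sA xs] := toA x; have [t tA yt] := toA y.
apply: connect_trans xs (connect_trans (connect_sub _ (conA s t sA tA)) _).
  by move=> a b /inToTouch /connect1.
by rewrite (sym_connect_sym (edgeTouch_sym A)).
Qed.

Lemma c_le (A : {set V}) : c e w A <= (#|V|%:R - 2%:R) / (Lc e w)%:R.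
Proof.
rewrite ler_pM2r ?invr_gt0 ?ltr0n ?Lc_gt0 // -addrA -opprD lerD2l lerN2 -natrD.
by rewrite ler_nat addnC p_add_q_ge2.
Qed.

Lemma c_eq_bound (A : {set V}) :
  c e w A = (#|V|%:R - 2%:R) / (Lc e w)%:R <-> (p e A + q e A = 2)%N.
Proof.
have Lneq0 : (Lc e w)%:R != 0 :> rat by rewrite pnatr_eq0 -lt0n Lc_gt0.
rewrite /c -addrA -opprD -natrD addnC; split => [|->] //.
by move/(mulIf (invr_neq0 Lneq0))/addrI/oppr_inj/eqP; rewrite eqr_nat => /eqP.
Qed.

Lemma dominatingP (A : {set V}) :
  (forall v, dominated A v) <-> (forall v, v \notin A -> Wt e w v / 2%:R <= WA e w A v).
Proof.
split=> domA v; first by move/negbTE=> vA; have := domA v; rewrite /dominated vA.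
by rewrite /dominated; case: (boolP (v \in A)) => //= /domA.
Qed.

Lemma WPPICDS_f_eq (S : {set V}) : is_WPPICDS e w S ->
  f e w S = hmax e w + (#|V|%:R - 2%:R) / (Lc e w)%:R.
Proof.
case=> /dominatingP domS conS; have [v0 v0S] := dominating_nonempty domS.
have p1 : p e S = 1%N := card_components_eq1 (edgeIn_sym S) v0S conS.
rewrite /f hmax_hfull h_dominating //; congr (_ + _); apply/c_eq_bound.
by rewrite p1 q_dominating_connected.
Qed.

Lemma f_eq_WPPICDS (S : {set V}) :
  f e w S = hmax e w + (#|V|%:R - 2%:R) / (Lc e w)%:R -> is_WPPICDS e w S.
Proof.
rewrite /f hmax_hfull => fS.
have domS v : dominated S v.
  apply: contraT => /h_undominated hS; have := c_le S.
  have : 0 < (Lc e w)%:R^-1 :> rat by rewrite invr_gt0 ltr0n Lc_gt0.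
  lra.
rewrite h_dominating // in fS; have /c_eq_bound pq2 := addrI _ fS.
have [v0 v0S] := dominating_nonempty domS.
have p1 : p e S = 1%N by have := p_gt0 v0S; have := q_gt0 S; lia.
by split; [apply/dominatingP | exact: card_components1_connect p1].
Qed.

End Domination.

Theorem mainTheorem19 (V : finType) (e : rel V) (w : V -> V -> rat)
  (e_sym : symmetric e) (e_irr : irreflexive e)
  (w_sym : forall x y, w x y = w y x)
  (w_pos : forall x y, e x y -> 0 < w x y)
  (G_conn : forall x y, connect e x y)
  (V_ge2 : (2 <= #|V|)%N)
  (S : {set V}) :
  is_WPPICDS e w S <->
  f e w S = hmax e w + (#|V|%:R - 2%:R) / (Lc e w)%:R.
Proof.
split; [exact: WPPICDS_f_eq | exact: f_eq_WPPICDS].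
Qed.
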